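(* Let $(M,(I,C),L)$ be a circuit-generating abstract machine with $M$ well-typed of type $\mathtt{bit}^m$ in a context of variables of type $\mathtt{bit}$, and suppose $(M,(I,C),L)\to_{am}(N,(I,C'),L')$. Let $\vec u=(u_i)_{i\in I}$ be a family of booleans. Then one of the following holds: the rewrite step is one eliminating a boolean constant $\mathtt{tt}$ or $\mathtt{ff}$ and $T(M,(I,C),L)(\vec u)$ is equal to $T(N,(I,C'),L')(\vec u)$; or $T(M,(I,C),L)(\vec u)\to T(N,(I,C'),L')(\vec u)$ in one step of the small-step relation; or $N$ contains the term $\mathtt{Err}$.
   Context: **Language $\mathbf{PCF}^{\mathbf{list}}$.** Terms: $M,N,P::= x \mid \lambda x.M \mid MN \mid \langle M,N\rangle \mid \pi_1(M)\mid\pi_2(M)\mid \mathtt{skip}\mid \mathtt{let}\ \mathtt{skip}=M\ \mathtt{in}\ N \mid \mathtt{tt}\mid\mathtt{ff}\mid \mathtt{if}\ M\ \mathtt{then}\ N\ \mathtt{else}\ P \mid \mathtt{and}\mid\mathtt{xor}\mid\mathtt{not}\mid \mathtt{inj}_1(M)\mid\mathtt{inj}_2(M)\mid \mathtt{match}\ P\ \mathtt{with}\ (x\mapsto M\mid y\mapsto N)\mid \mathtt{split}\mid Y(M)\mid \mathtt{Err}$. Types: $A,B::=\mathtt{bit}\mid A\oplus B\mid A\times B\mid \mathbf 1\mid A\to B\mid [A]$. Typing rules (context $\Delta$): $\Delta,x:A\vdash x:A$; $\mathtt{tt},\mathtt{ff}:\mathtt{bit}$; $\mathtt{skip}:\mathbf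 1$; $\mathtt{Err}:A$ for any $A$; $\mathtt{not}:\mathtt{bit}\to\mathtt{bit}$; $\mathtt{and},\mathtt{xor}:\mathtt{bit}\times\mathtt{bit}\to\mathtt{bit}$; $\mathtt{split}:[A]\to\mathbf 1\oplus(A\times[A])$; the usual rules for $\lambda$, application, pairs, projections, injections, $\mathtt{let}\ \mathtt{skip}$, and $\mathtt{match}$; if $\Delta\vdash M:\mathbf 1\oplus(A\times[A])$ then $\Delta\vdash M:[A]$; if $\Delta\vdash M:A\to A$ then $\Delta\vdash Y(M):A$; $\mathtt{if}\ P\ \mathtt{then}\ M\ \mathtt{else}\ N : C$ when $P:\mathtt{bit}$, $M,N:C$ and $C$ is first-order ($C::=\mathtt{bit}\mid C\times C\mid [C]$). Notation: $[M_1,\ldots,M_n]=\mathtt{inj}_2\langle M_1,\cdots\mathtt{inj}_2\langle M_n,\mathtt{inj}_1(\mathtt{skip})\rangle\rangle$, $\langle M_1,\ldots,M_n\rangle=\langle M_1,\langle\ldots,M_n\rangle\rangle$, $\mathtt{bit}^m$ the $m$-fold right-nested product of $\mathtt{bit}$. **Small-step semantics $\to$:** the smallest relation closed under arbitrary subterm contexts containing $(\lambda x.M)N\to M[N/x]$; $\pi_i\langle M_1,M_2\rangle\to M_i$; $\mathtt{let}\ \mathtt{skip}=\mathtt{skip}\ \mathtt{in}\ M\to M$; $\mathtt{if}\ \mathtt{tt}\ \mathtt{then}\ M\ \mathtt{else}\ N\to M$; $\mathtt{if}\ \mathtt{ff}\ \mathtt{then}\ M\ \mathtt{else}\ N\to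 N$; $\mathtt{split}\,M\to M$; $\mathtt{match}\ \mathtt{inj}_i(P)\ \mathtt{with}\ (x_1\mapsto M_1\mid x_2\mapsto M_2)\to M_i[P/x_i]$; $Y(M)\to M(Y(M))$; and the evident rules computing $\mathtt{not},\mathtt{and},\mathtt{xor}$ on the constants $\mathtt{tt},\mathtt{ff}$. $\mathtt{Err}$ does not reduce. **Reversible circuits.** A gate is $\mathrm{cnot}_i(b_1^{j_1}\ldots b_r^{j_r})$ with $i,j_1,\ldots,j_r$ natural numbers, $i\neq j_k$, $b_k$ booleans (written $\mathrm{not}_i$ if $r=0$); $\mathrm{wires}(C)$ is the set of all indices occurring in the gates of a list $C$. A circuit is $(I,C,O)$ with $C$ a list of gates and $I,O$ sets of wires. Executing $\mathrm{cnot}_i(b_1^{j_1}\ldots b_r^{j_r})$ on a valuation $v$ gives $w$ with $w_l=v_l$ for $l\neq i$ and $w_i=v_i\ \mathtt{xor}\ \bigwedge_{k}(v_{j_k}\ \mathtt{xor}\ b_k\ \mathtt{xor}\ \mathtt{tt})$ ($w_i=\mathtt{not}(v_i)$ if $r=0$). Executing $(I,C,O)$ on $(x_i)_{i\in I}$: set $v_k=x_k$ for $k\in I$ and $v_k=\mathtt{ff}$ otherwise, execute the gates of $C$ in reverse list order, return $(v_k)_{k\in O}$. **Abstract machines.** A circuit-generating abstract machine is $(M,(I,C),L)$ with $p_1:\mathtt{bit},\ldots,p_{n+k}:\mathtt{bit}\vdash M:\mathtt{bit}^m$, $I=\{1,\ldots,n\}$, $C$ a list of gates, $L$ a one-to-one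 map from the free variables of $M$ onto wires in $\mathrm{wires}(C)\cup I$. A first-order extension of $L$ is a term built from variables in the domain of $L$ using tuples and list literals; two have the same shape if both are tuples of equal size or lists of equal length with componentwise same shape. Beta-contexts $E[-]$ are one-hole contexts with the hole in any immediate subterm position of any constructor. $\to_{am}$: $(E[R],RC,L)\to_{am}(E[R'],RC,L)$ for $(\lambda x.M)N\mapsto M[N/x]$, $\pi_i\langle M_1,M_2\rangle\mapsto M_i$, $\mathtt{let}\ \mathtt{skip}=\mathtt{skip}\ \mathtt{in}\ M\mapsto M$, $\mathtt{split}\,M\mapsto M$, $\mathtt{match}\ \mathtt{inj}_i(P)\ldots\mapsto M_i[P/x_i]$, $Y(M)\mapsto M(Y(M))$; and the boolean rules, with $i_0$ a new wire, $p_{i_0}$ fresh, $L'=L\cup\{p_{i_0}\mapsto i_0\}$, $G::(I,C)=(I,G::C)$: $(E[\mathtt{ff}],RC,L)\to_{am}(E[p_{i_0}],RC,L')$; $(E[\mathtt{tt}],RC,L)\to_{am}(E[p_{i_0}],\mathrm{not}_{i_0}::RC,L')$; $(E[\mathtt{not}\ p_i],RC,L)\to_{am}(E[p_{i_0}],\mathrm{cnot}_{i_0}(\mathtt{ff}^{L(p_i)})::RC,L')$; $(E[\mathtt{and}\ p_i\ p_j],RC,L)\to_{am}(E[p_{i_0}],\mathrm{cnot}_{i_0}(\mathtt{tt}^{L(p_i)}\mathtt{tt}^{L(p_j)})::RC,L')$; $(E[\mathtt{xor}\ p_i\ p_j],RC,L)\to_{am}(E[p_{i_0}],\mathrm{cnot}_{i_0}(\mathtt{tt}^{L(p_i)})::\mathrm{cnot}_{i_0}(\mathtt{tt}^{L(p_j)})::RC,L')$;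 and for first-order extensions $V,W$ of $L$ of the same shape, $(E[\mathtt{if}\ p_i\ \mathtt{then}\ V\ \mathtt{else}\ W],RC,L)\to_{am}(E[U],RC',L'')$ where $U$ has the same shape with fresh pairwise-distinct variables $u_1,\ldots,u_r$ mapped by $L''\supseteq L$ to new distinct wires, and, with $v_j,w_j$ the corresponding variables of $V,W$, $RC'$ is $RC$ extended with the gates $\mathrm{cnot}_{u_j}(\mathtt{tt}^{p_i}\mathtt{tt}^{v_j})$ and $\mathrm{cnot}_{u_j}(\mathtt{ff}^{p_i}\mathtt{tt}^{w_j})$ (variables standing for their wires); if $V,W$ do not have the same shape it steps to $E[\mathtt{Err}]$. **Readback.** For $(M,(I,C),L)$ and $\vec u=(u_i)_{i\in I}$, let $v$ be the final valuation from executing $(I,C,\mathrm{Range}(L))$ on $\vec u$; $T(M,(I,C),L)(\vec u)$ is $M$ with each free variable $x$ replaced by the boolean constant $v_{L(x)}$. *)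

From Stdlib Require Import List Arith Bool.
Import ListNotations.

Inductive ty : Type :=
| TBit : ty
| TSum : ty -> ty -> ty
| TProd : ty -> ty -> ty
| TUnit : ty
| TArr : ty -> ty -> ty
| TList : ty -> ty.

Inductive first_order : ty -> Prop :=
| FO_bit : first_order TBit
| FO_prod : forall A B, first_order A -> first_order B -> first_order (TProd A B)
| FO_list : forall A, first_order A -> first_order (TList A).

Fixpoint bitn (m : nat) : ty :=
  match m with
  | 0 => TUnit
  | 1 => TBit
  | S m' => TProd TBit (bitn m')
  end.

(* Terms.  Bound variables (introduced by lambda and match) are de Bruijn
   indices [BVar]; free variables (the context variables p_i of the machine)
   are named by natural numbers [FVar]. *)
Inductive tm : Type :=
| BVar : nat -> tm
| FVar : nat -> tm
| Lam : tm -> tm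
| App : tm -> tm -> tm
| Pair : tm -> tm -> tm
| Pi1 : tm -> tm
| Pi2 : tm -> tm
| Skip : tm
| LetSkip : tm -> tm -> tm
| Tt : tm
| Ff : tm
| If : tm -> tm -> tm -> tm
| And : tm
| Xor : tm
| Not : tm
| Inj1 : tm -> tm
| Inj2 : tm -> tm
| Match : tm -> tm -> tm -> tm        (* match P with (x |-> M | y |-> N); M, N bind one var *)
| Split : tm
| Y : tm -> tm
| Err : tm.

Definition of_bool (b : bool) : tm := if b then Tt else Ff.

Fixpoint lift (c d : nat) (t : tm) : tm :=
  match t with
  | BVar i => if i <? c then BVar i else BVar (i + d)
  | FVar x => FVar x
  | Lam M => Lam (lift (S c) d M)
  | App M N => App (lift c d M) (lift c d N)
  | Pair M N => Pair (lift c d M) (lift c d N)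
  | Pi1 M => Pi1 (lift c d M)
  | Pi2 M => Pi2 (lift c d M)
  | Skip => Skip
  | LetSkip M N => LetSkip (lift c d M) (lift c d N)
  | Tt => Tt
  | Ff => Ff
  | If P M N => If (lift c d P) (lift c d M) (lift c d N)
  | And => And
  | Xor => Xor
  | Not => Not
  | Inj1 M => Inj1 (lift c d M)
  | Inj2 M => Inj2 (lift c d M)
  | Match P M N => Match (lift c d P) (lift (S c) d M) (lift (S c) d N)
  | Split => Split
  | Y M => Y (lift c d M)
  | Err => Err
  end.

Fixpoint subst (k : nat) (N : tm) (t : tm) : tm :=
  match t with
  | BVar i => if i <? k then BVar i else if i =? k then lift 0 k N else BVar (i - 1)
  | FVar x => FVar x
  | Lam M => Lam (subst (S k) N M)
  | App M1 M2 => App (subst k N M1) (subst k N M2)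
  | Pair M1 M2 => Pair (subst k N M1) (subst k N M2)
  | Pi1 M => Pi1 (subst k N M)
  | Pi2 M => Pi2 (subst k N M)
  | Skip => Skip
  | LetSkip M1 M2 => LetSkip (subst k N M1) (subst k N M2)
  | Tt => Tt
  | Ff => Ff
  | If P M1 M2 => If (subst k N P) (subst k N M1) (subst k N M2)
  | And => And
  | Xor => Xor
  | Not => Not
  | Inj1 M => Inj1 (subst k N M)
  | Inj2 M => Inj2 (subst k N M)
  | Match P M1 M2 => Match (subst k N P) (subst (S k) N M1) (subst (S k) N M2)
  | Split => Split
  | Y M => Y (subst k N M)
  | Err => Err
  end.

Definition subst0 (N M : tm) : tm := subst 0 N M.

(* Typing:  Delta (free variables) ; Gamma (bound variables) |- M : A *)
Inductive has_type (Delta : nat -> option ty) : list ty -> tm -> ty -> Prop :=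
| T_BVar : forall G i A, nth_error G i = Some A -> has_type Delta G (BVar i) A
| T_FVar : forall G x A, Delta x = Some A -> has_type Delta G (FVar x) A
| T_Lam : forall G M A B, has_type Delta (A :: G) M B -> has_type Delta G (Lam M) (TArr A B)
| T_App : forall G M N A B, has_type Delta G M (TArr A B) -> has_type Delta G N A ->
    has_type Delta G (App M N) B
| T_Pair : forall G M N A B, has_type Delta G M A -> has_type Delta G N B ->
    has_type Delta G (Pair M N) (TProd A B)
| T_Pi1 : forall G M A B, has_type Delta G M (TProd A B) -> has_type Delta G (Pi1 M) A
| T_Pi2 : forall G M A B, has_type Delta G M (TProd A B) -> has_type Delta G (Pi2 M) B
| T_Skip : forall G, has_type Delta G Skip TUnit
| T_LetSkip : forall G M N A, has_type Delta G M TUnit -> has_type Delta G N A ->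
    has_type Delta G (LetSkip M N) A
| T_Tt : forall G, has_type Delta G Tt TBit
| T_Ff : forall G, has_type Delta G Ff TBit
| T_If : forall G P M N A, has_type Delta G P TBit -> has_type Delta G M A ->
    has_type Delta G N A -> first_order A -> has_type Delta G (If P M N) A
| T_And : forall G, has_type Delta G And (TArr (TProd TBit TBit) TBit)
| T_Xor : forall G, has_type Delta G Xor (TArr (TProd TBit TBit) TBit)
| T_Not : forall G, has_type Delta G Not (TArr TBit TBit)
| T_Inj1 : forall G M A B, has_type Delta G M A -> has_type Delta G (Inj1 M) (TSum A B)
| T_Inj2 : forall G M A B, has_type Delta G M B -> has_type Delta G (Inj2 M) (TSum A B)
| T_Match : forall G P M N A B C, has_type Delta G P (TSum A B) ->
    has_type Delta (A :: G) M C -> has_type Delta (B :: G) N C ->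
    has_type Delta G (Match P M N) C
| T_Split : forall G A,
    has_type Delta G Split (TArr (TList A) (TSum TUnit (TProd A (TList A))))
| T_List : forall G M A, has_type Delta G M (TSum TUnit (TProd A (TList A))) ->
    has_type Delta G M (TList A)
| T_Y : forall G M A, has_type Delta G M (TArr A A) -> has_type Delta G (Y M) A
| T_Err : forall G A, has_type Delta G Err A.

(* One-hole contexts (hole in any subterm position, including under binders) *)
Inductive ctx : Type :=
| Hole : ctx
| CLam : ctx -> ctx
| CAppL : ctx -> tm -> ctx
| CAppR : tm -> ctx -> ctx
| CPairL : ctx -> tm -> ctx
| CPairR : tm -> ctx -> ctx
| CPi1 : ctx -> ctx
| CPi2 : ctx -> ctx
| CLetL : ctx -> tm -> ctx
| CLetR : tm -> ctx -> ctx
| CIf1 : ctx -> tm -> tm -> ctx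
| CIf2 : tm -> ctx -> tm -> ctx
| CIf3 : tm -> tm -> ctx -> ctx
| CInj1 : ctx -> ctx
| CInj2 : ctx -> ctx
| CMatch1 : ctx -> tm -> tm -> ctx
| CMatch2 : tm -> ctx -> tm -> ctx
| CMatch3 : tm -> tm -> ctx -> ctx
| CY : ctx -> ctx.

Fixpoint fill (E : ctx) (R : tm) : tm :=
  match E with
  | Hole => R
  | CLam E => Lam (fill E R)
  | CAppL E N => App (fill E R) N
  | CAppR M E => App M (fill E R)
  | CPairL E N => Pair (fill E R) N
  | CPairR M E => Pair M (fill E R)
  | CPi1 E => Pi1 (fill E R)
  | CPi2 E => Pi2 (fill E R)
  | CLetL E N => LetSkip (fill E R) N
  | CLetR M E => LetSkip M (fill E R)
  | CIf1 E M N => If (fill E R) M N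
  | CIf2 P E N => If P (fill E R) N
  | CIf3 P M E => If P M (fill E R)
  | CInj1 E => Inj1 (fill E R)
  | CInj2 E => Inj2 (fill E R)
  | CMatch1 E M N => Match (fill E R) M N
  | CMatch2 P E N => Match P (fill E R) N
  | CMatch3 P M E => Match P M (fill E R)
  | CY E => Y (fill E R)
  end.

Definition contains_err (M : tm) : Prop := exists E, M = fill E Err.

(* the "structural" rules shared by -> and ->am *)
Inductive pure_red : tm -> tm -> Prop :=
| R_beta : forall M N, pure_red (App (Lam M) N) (subst0 N M)
| R_pi1 : forall M1 M2, pure_red (Pi1 (Pair M1 M2)) M1
| R_pi2 : forall M1 M2, pure_red (Pi2 (Pair M1 M2)) M2
| R_let : forall M, pure_red (LetSkip Skip M) M
| R_split : forall M, pure_red (App Split M) M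
| R_match1 : forall P M1 M2, pure_red (Match (Inj1 P) M1 M2) (subst0 P M1)
| R_match2 : forall P M1 M2, pure_red (Match (Inj2 P) M1 M2) (subst0 P M2)
| R_Y : forall M, pure_red (Y M) (App M (Y M)).

Inductive head_red : tm -> tm -> Prop :=
| H_pure : forall M N, pure_red M N -> head_red M N
| H_if_tt : forall M N, head_red (If Tt M N) M
| H_if_ff : forall M N, head_red (If Ff M N) N
| H_not : forall b, head_red (App Not (of_bool b)) (of_bool (negb b))
| H_and : forall b1 b2,
    head_red (App And (Pair (of_bool b1) (of_bool b2))) (of_bool (b1 && b2))
| H_xor : forall b1 b2,
    head_red (App Xor (Pair (of_bool b1) (of_bool b2))) (of_bool (xorb b1 b2)).

Definition step (M N : tm) : Prop :=
  exists E R R', M = fill E R /\ N = fill E R' /\ head_red R R'.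

(* Gate i [(b1,j1);...;(br,jr)] is cnot_i(b1^j1 ... br^jr) *)
Inductive gate : Type := Gate : nat -> list (bool * nat) -> gate.

Definition gate_wires (g : gate) : list nat :=
  let (i, cs) := g in i :: map snd cs.

Definition gate_wf (g : gate) : Prop :=
  let (i, cs) := g in forall b j, In (b, j) cs -> i <> j.

Definition wires (C : list gate) : list nat := flat_map gate_wires C.

Definition valuation := nat -> bool.

Definition exec_gate (g : gate) (v : valuation) : valuation :=
  let (i, cs) := g in
  fun l => if l =? i then
             xorb (v i) (forallb (fun bj => xorb (xorb (v (snd bj)) (fst bj)) true) cs)
           else v l.

(* input wires I = {1,...,n} *)
Definition in_I (n w : nat) : Prop := 1 <= w <= n.

(* final valuation obtained by executing (I, C, _) on the inputs (u_i)_{i in I}: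
   inputs set on I, ff elsewhere; the gates of C run in reverse list order *)
Definition run (n : nat) (C : list gate) (u : nat -> bool) : valuation :=
  fold_right exec_gate (fun k => if (1 <=? k) && (k <=? n) then u k else false) C.

Definition lmap := nat -> option nat.

Definition upd (L : lmap) (x w : nat) : lmap :=
  fun y => if y =? x then Some w else L y.

Definition ctx_of (L : lmap) : nat -> option ty :=
  fun x => match L x with Some _ => Some TBit | None => None end.

Definition new_wire (n : nat) (C : list gate) (L : lmap) (w : nat) : Prop :=
  ~ In w (wires C) /\ ~ in_I n w /\ (forall x, L x <> Some w).

Definition fresh_var (L : lmap) (x : nat) : Prop := L x = None.

Inductive foe (L : lmap) : tm -> Prop :=
| Foe_var : forall x w, L x = Some w -> foe L (FVar x)
| Foe_pair : forall V W, foe L V -> foe L W -> foe L (Pair V W)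
| Foe_list : forall V, foe_list L V -> foe L V
with foe_list (L : lmap) : tm -> Prop :=
| Foe_nil : foe_list L (Inj1 Skip)
| Foe_cons : forall V l, foe L V -> foe_list L l -> foe_list L (Inj2 (Pair V l)).

Inductive same_shape : tm -> tm -> Prop :=
| SS_var : forall x y, same_shape (FVar x) (FVar y)
| SS_pair : forall V1 V2 W1 W2, same_shape V1 W1 -> same_shape V2 W2 ->
    same_shape (Pair V1 V2) (Pair W1 W2)
| SS_nil : same_shape (Inj1 Skip) (Inj1 Skip)
| SS_cons : forall V l W l', same_shape V W -> same_shape l l' ->
    same_shape (Inj2 (Pair V l)) (Inj2 (Pair W l')).

(* if_gen n C c V W L0 U G L1 : building the output U of
   [if p then V else W] (c = L(p)), with fresh pairwise-distinct variables
   mapped to new distinct wires (L1 extends L0), and G the generated gates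
   cnot_u(tt^p tt^v), cnot_u(ff^p tt^w) for each position. *)
Inductive if_gen (n : nat) (C : list gate) (c : nat) :
  tm -> tm -> lmap -> tm -> list gate -> lmap -> Prop :=
| IG_var : forall x y wx wy L0 z w,
    L0 x = Some wx -> L0 y = Some wy ->
    fresh_var L0 z -> new_wire n C L0 w ->
    if_gen n C c (FVar x) (FVar y) L0 (FVar z)
      [Gate w [(true, c); (true, wx)]; Gate w [(false, c); (true, wy)]] (upd L0 z w)
| IG_pair : forall V1 V2 W1 W2 L0 U1 G1 L1 U2 G2 L2,
    if_gen n C c V1 W1 L0 U1 G1 L1 -> if_gen n C c V2 W2 L1 U2 G2 L2 ->
    if_gen n C c (Pair V1 V2) (Pair W1 W2) L0 (Pair U1 U2) (G1 ++ G2) L2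
| IG_nil : forall L0,
    if_gen n C c (Inj1 Skip) (Inj1 Skip) L0 (Inj1 Skip) [] L0
| IG_cons : forall V l W l' L0 U G1 L1 lu G2 L2,
    if_gen n C c V W L0 U G1 L1 -> if_gen n C c l l' L1 lu G2 L2 ->
    if_gen n C c (Inj2 (Pair V l)) (Inj2 (Pair W l')) L0 (Inj2 (Pair U lu)) (G1 ++ G2) L2.

Inductive step_kind : Type := KConst | KOther.

Inductive am_head (n : nat) :
  step_kind -> tm -> list gate -> lmap -> tm -> list gate -> lmap -> Prop :=
| AM_pure : forall R R' C L, pure_red R R' -> am_head n KOther R C L R' C L
| AM_ff : forall C L z w, fresh_var L z -> new_wire n C L w ->
    am_head n KConst Ff C L (FVar z) C (upd L z w)
| AM_tt : forall C L z w, fresh_var L z -> new_wire n C L w ->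
    am_head n KConst Tt C L (FVar z) (Gate w [] :: C) (upd L z w)
| AM_not : forall C L p wp z w, L p = Some wp -> fresh_var L z -> new_wire n C L w ->
    am_head n KOther (App Not (FVar p)) C L (FVar z)
      (Gate w [(false, wp)] :: C) (upd L z w)
| AM_and : forall C L p q wp wq z w, L p = Some wp -> L q = Some wq ->
    fresh_var L z -> new_wire n C L w ->
    am_head n KOther (App And (Pair (FVar p) (FVar q))) C L (FVar z)
      (Gate w [(true, wp); (true, wq)] :: C) (upd L z w)
| AM_xor : forall C L p q wp wq z w, L p = Some wp -> L q = Some wq ->
    fresh_var L z -> new_wire n C L w ->
    am_head n KOther (App Xor (Pair (FVar p) (FVar q))) C L (FVar z)
      (Gate w [(true, wp)] :: Gate w [(true, wq)] :: C) (upd L z w)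
| AM_if : forall C L p wp V W U G L'',
    L p = Some wp -> foe L V -> foe L W -> same_shape V W ->
    if_gen n C wp V W L U G L'' ->
    am_head n KOther (If (FVar p) V W) C L U (G ++ C) L''
| AM_if_err : forall C L p wp V W,
    L p = Some wp -> foe L V -> foe L W -> ~ same_shape V W ->
    am_head n KOther (If (FVar p) V W) C L Err C L.

Definition am_step (n : nat) (k : step_kind) (M : tm) (C : list gate) (L : lmap)
    (N : tm) (C' : list gate) (L' : lmap) : Prop :=
  exists E R R', M = fill E R /\ N = fill E R' /\ am_head n k R C L R' C' L'.

Definition cgam (n : nat) (M : tm) (C : list gate) (L : lmap) (m : nat) : Prop :=
  has_type (ctx_of L) [] M (bitn m) /\
  (exists dom : list nat, forall x, L x <> None <-> In x dom) /\
  (forall x y w, L x = Some w -> L y = Some w -> x = y) /\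
  (forall x w, L x = Some w -> In w (wires C) \/ in_I n w) /\
  (forall g, In g C -> gate_wf g).

Fixpoint replace_fv (f : nat -> option bool) (t : tm) : tm :=
  match t with
  | BVar i => BVar i
  | FVar x => match f x with Some b => of_bool b | None => FVar x end
  | Lam M => Lam (replace_fv f M)
  | App M N => App (replace_fv f M) (replace_fv f N)
  | Pair M N => Pair (replace_fv f M) (replace_fv f N)
  | Pi1 M => Pi1 (replace_fv f M)
  | Pi2 M => Pi2 (replace_fv f M)
  | Skip => Skip
  | LetSkip M N => LetSkip (replace_fv f M) (replace_fv f N)
  | Tt => Tt
  | Ff => Ff
  | If P M N => If (replace_fv f P) (replace_fv f M) (replace_fv f N)
  | And => And
  | Xor => Xor
  | Not => Not
  | Inj1 M => Inj1 (replace_fv f M)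
  | Inj2 M => Inj2 (replace_fv f M)
  | Match P M N => Match (replace_fv f P) (replace_fv f M) (replace_fv f N)
  | Split => Split
  | Y M => Y (replace_fv f M)
  | Err => Err
  end.

Definition readback (n : nat) (C : list gate) (L : lmap) (M : tm) (u : nat -> bool) : tm :=
  let v := run n C u in
  replace_fv (fun x => match L x with Some w => Some (v w) | None => None end) M.

(* A machine step only extends L and only adds gates whose targets are
   new wires, so the readback of the surrounding context does not change.  At the
   redex, a constant tt/ff becomes a variable on a fresh wire carrying that
   constant; not/and/xor become a variable on a fresh wire carrying the computed
   bit, so the readback performs the boolean reduction; and the wires generated
   for [if p then V else W] compute (p /\ v_j) xor (~p /\ w_j), i.e. the selected
   branch, so the readback performs the if-reduction. *)
From Stdlib Require Import List Arith Bool.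
Import ListNotations.

Fixpoint fvs (t : tm) : list nat :=
  match t with
  | BVar _ | Skip | Tt | Ff | And | Xor | Not | Split | Err => []
  | FVar x => [x]
  | Lam M | Pi1 M | Pi2 M | Inj1 M | Inj2 M | Y M => fvs M
  | App M N | Pair M N | LetSkip M N => fvs M ++ fvs N
  | If P M N | Match P M N => fvs P ++ fvs M ++ fvs N
  end.

Fixpoint ctx_rfv (f : nat -> option bool) (E : ctx) : ctx :=
  match E with
  | Hole => Hole
  | CLam E => CLam (ctx_rfv f E)
  | CAppL E N => CAppL (ctx_rfv f E) (replace_fv f N)
  | CAppR M E => CAppR (replace_fv f M) (ctx_rfv f E)
  | CPairL E N => CPairL (ctx_rfv f E) (replace_fv f N)
  | CPairR M E => CPairR (replace_fv f M) (ctx_rfv f E)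
  | CPi1 E => CPi1 (ctx_rfv f E)
  | CPi2 E => CPi2 (ctx_rfv f E)
  | CLetL E N => CLetL (ctx_rfv f E) (replace_fv f N)
  | CLetR M E => CLetR (replace_fv f M) (ctx_rfv f E)
  | CIf1 E M N => CIf1 (ctx_rfv f E) (replace_fv f M) (replace_fv f N)
  | CIf2 P E N => CIf2 (replace_fv f P) (ctx_rfv f E) (replace_fv f N)
  | CIf3 P M E => CIf3 (replace_fv f P) (replace_fv f M) (ctx_rfv f E)
  | CInj1 E => CInj1 (ctx_rfv f E)
  | CInj2 E => CInj2 (ctx_rfv f E)
  | CMatch1 E M N => CMatch1 (ctx_rfv f E) (replace_fv f M) (replace_fv f N)
  | CMatch2 P E N => CMatch2 (replace_fv f P) (ctx_rfv f E) (replace_fv f N)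
  | CMatch3 P M E => CMatch3 (replace_fv f P) (replace_fv f M) (ctx_rfv f E)
  | CY E => CY (ctx_rfv f E)
  end.

Lemma rfv_fill f E R : replace_fv f (fill E R) = fill (ctx_rfv f E) (replace_fv f R).
Proof. induction E; simpl; congruence. Qed.

Lemma rfv_ext t f g : (forall x, In x (fvs t) -> f x = g x) ->
  replace_fv f t = replace_fv g t.
Proof.
  induction t; simpl; intros H; try reflexivity;
    try (rewrite H by auto; reflexivity);
    f_equal; try (first [apply IHt | apply IHt1 | apply IHt2 | apply IHt3]);
    intros; apply H; rewrite ?in_app_iff; tauto.
Qed.

(* The free variables of a context [E] are taken to be those of [fill E Skip]. *)
Lemma ctx_rfv_ext E f g : (forall x, In x (fvs (fill E Skip)) -> f x = g x) ->
  ctx_rfv f E = ctx_rfv g E.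
Proof.
  induction E; simpl; intros H; try reflexivity;
    f_equal; try apply IHE; try apply rfv_ext;
    intros; apply H; rewrite ?in_app_iff; tauto.
Qed.

Lemma in_fvs_fill E R x :
  In x (fvs (fill E R)) <-> In x (fvs (fill E Skip)) \/ In x (fvs R).
Proof. induction E; simpl; rewrite ?in_app_iff; tauto. Qed.

Lemma rfv_lift f t c d : replace_fv f (lift c d t) = lift c d (replace_fv f t).
Proof.
  revert c; induction t; simpl; intros; try congruence.
  - destruct (n <? c); reflexivity.
  - destruct (f n) as [[]|]; reflexivity.
Qed.

Lemma rfv_subst f t k N :
  replace_fv f (subst k N t) = subst k (replace_fv f N) (replace_fv f t).
Proof.
  revert k; induction t; simpl; intros; try congruence.
  - destruct (n <? k); [reflexivity|].
    destruct (n =? k); [apply rfv_lift|reflexivity].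
  - destruct (f n) as [[]|]; reflexivity.
Qed.

Lemma pure_red_rfv f R R' :
  pure_red R R' -> pure_red (replace_fv f R) (replace_fv f R').
Proof. destruct 1; simpl; unfold subst0; rewrite ?rfv_subst; constructor. Qed.

Definition scoped (L : lmap) (t : tm) : Prop := forall x, In x (fvs t) -> L x <> None.

Lemma typed_scoped L G t A : has_type (ctx_of L) G t A -> scoped L t.
Proof.
  unfold scoped, ctx_of.
  induction 1; simpl; intros y Hy; rewrite ?in_app_iff in Hy; try tauto;
    try (destruct Hy as [->|[]]; destruct (L y); congruence); firstorder.
Qed.

Lemma scoped_pair L V W : scoped L (Pair V W) -> scoped L V /\ scoped L W.
Proof. intros HP; split; intros x Hx; apply HP; simpl; rewrite in_app_iff; auto. Qed.

Lemma scoped_extend L L' t : (forall x w, L x = Some w -> L' x = Some w) ->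
  scoped L t -> scoped L' t.
Proof.
  intros Hext Ht x Hx HL'; destruct (L x) as [w|] eqn:HL.
  - rewrite (Hext _ _ HL) in HL'; discriminate.
  - exact (Ht x Hx HL).
Qed.

Lemma scoped_if L (b : bool) V W : scoped L V -> scoped L W -> scoped L (if b then V else W).
Proof. destruct b; auto. Qed.

Definition env_of (L : lmap) (v : valuation) : nat -> option bool :=
  fun x => option_map v (L x).

Lemma readback_env n C L M u : readback n C L M u = replace_fv (env_of L (run n C u)) M.
Proof. reflexivity. Qed.

Lemma env_of_agree L v L' v' x w :
  L x = Some w -> L' x = Some w -> v' w = v w -> env_of L' v' x = env_of L v x.
Proof. unfold env_of; intros -> -> Hv; simpl; rewrite Hv; reflexivity. Qed.

Lemma upd_eq L z w : upd L z w z = Some w.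
Proof. unfold upd; rewrite Nat.eqb_refl; reflexivity. Qed.

Lemma rfv_frame L v L' v' t : scoped L t ->
  (forall x w, L x = Some w -> L' x = Some w /\ v' w = v w) ->
  replace_fv (env_of L' v') t = replace_fv (env_of L v) t.
Proof.
  intros Ht Hf; apply rfv_ext; intros x Hx.
  destruct (L x) as [w|] eqn:Hl; [|now destruct (Ht x Hx)].
  destruct (Hf x w Hl); eapply env_of_agree; eauto.
Qed.

Lemma ctx_rfv_frame L v L' v' E : scoped L (fill E Skip) ->
  (forall x w, L x = Some w -> L' x = Some w /\ v' w = v w) ->
  ctx_rfv (env_of L' v') E = ctx_rfv (env_of L v) E.
Proof.
  intros HE Hf; apply ctx_rfv_ext; intros x Hx.
  destruct (L x) as [w|] eqn:Hl; [|now destruct (HE x Hx)].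
  destruct (Hf x w Hl); eapply env_of_agree; eauto.
Qed.

Definition targets (G : list gate) : list nat := map (fun '(Gate i _) => i) G.

Lemma targets_app G1 G2 : targets (G1 ++ G2) = targets G1 ++ targets G2.
Proof. apply map_app. Qed.

Lemma exec_gate_other i cs v l : l <> i -> exec_gate (Gate i cs) v l = v l.
Proof. intros H; simpl; rewrite (proj2 (Nat.eqb_neq _ _) H); reflexivity. Qed.

Lemma exec_gate_target i cs v : exec_gate (Gate i cs) v i =
  xorb (v i) (forallb (fun bj => xorb (xorb (v (snd bj)) (fst bj)) true) cs).
Proof. simpl; rewrite Nat.eqb_refl; reflexivity. Qed.

Lemma fold_exec_other G v t : ~ In t (targets G) -> fold_right exec_gate v G t = v t.
Proof.
  induction G as [|[i cs] G IH]; simpl; intros H; auto.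
  rewrite <- IH by tauto; apply exec_gate_other; intro; apply H; auto.
Qed.

Lemma run_cons n g C u : run n (g :: C) u = exec_gate g (run n C u).
Proof. reflexivity. Qed.

Lemma run_app n G C u : run n (G ++ C) u = fold_right exec_gate (run n C u) G.
Proof. apply fold_right_app. Qed.

Lemma run_new_wire n C L u w : new_wire n C L w -> run n C u w = false.
Proof.
  intros (Hw & HI & _); unfold run.
  induction C as [|[i cs] C IH]; cbn [fold_right]; simpl in Hw.
  - destruct ((1 <=? w) && (w <=? n)) eqn:Hb; [|reflexivity].
    apply andb_true_iff in Hb as [H1 H2]; apply Nat.leb_le in H1, H2.
    destruct HI; split; auto.
  - rewrite exec_gate_other by (intros ->; apply Hw; auto).
    apply IH; rewrite in_app_iff in Hw; tauto.
Qed.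

Lemma upd_fresh n C L z w x w0 : fresh_var L z -> new_wire n C L w ->
  L x = Some w0 -> upd L z w x = Some w0 /\ w0 <> w.
Proof.
  unfold fresh_var, upd; intros Hz (_ & _ & Hw) Hx; split.
  - destruct (Nat.eqb_spec x z); congruence.
  - intros ->; exact (Hw x Hx).
Qed.

Section IfGen.

Variables (n : nat) (C : list gate) (c : nat).

Lemma if_gen_extends V W L0 U G L1 : if_gen n C c V W L0 U G L1 ->
  forall x w, L0 x = Some w -> L1 x = Some w.
Proof.
  induction 1; auto. intros x0 w0 Hx0; exact (proj1 (upd_fresh _ _ _ _ _ _ _ H1 H2 Hx0)).
Qed.

Lemma new_wire_weaken L0 L1 w : (forall x w, L0 x = Some w -> L1 x = Some w) ->
  new_wire n C L1 w -> new_wire n C L0 w.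
Proof. intros Hext (A & B & D); repeat split; auto. intros x Hx; apply (D x), Hext, Hx. Qed.

Lemma if_gen_targets V W L0 U G L1 : if_gen n C c V W L0 U G L1 ->
  forall t, In t (targets G) -> new_wire n C L0 t /\ exists x, L1 x = Some t.
Proof.
  induction 1 as [x y wx wy L0 z w _ _ _ Hw | ? ? ? ? L0 ? ? L1 ? ? L2 H1 IH1 H2 IH2
                 | | ? ? ? ? L0 ? ? L1 ? ? L2 H1 IH1 H2 IH2];
    intros t Ht; simpl in Ht; try rewrite targets_app, in_app_iff in Ht; try tauto.
  1: destruct Ht as [<-|[<-|[]]]; (split; [exact Hw | exists z; apply upd_eq]).
  all: destruct Ht as [Ht|Ht]; [destruct (IH1 t Ht) as [? [x ?]]
                               |destruct (IH2 t Ht) as [? ?]];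
       split; eauto using new_wire_weaken, if_gen_extends.
Qed.

Lemma if_gen_outputs V W L0 U G L1 : if_gen n C c V W L0 U G L1 ->
  forall x, In x (fvs U) -> exists t, L1 x = Some t /\ In t (targets G).
Proof.
  induction 1; simpl; intros x0 Hx0; rewrite ?in_app_iff in Hx0; try tauto.
  1: destruct Hx0 as [<-|[]]; exists w; split; [apply upd_eq|auto].
  all: rewrite targets_app; setoid_rewrite in_app_iff;
    destruct Hx0 as [Hx0|Hx0]; [destruct (IHif_gen1 _ Hx0) as (t & ? & ?)
                               |destruct (IHif_gen2 _ Hx0) as (t & ? & ?)];
    exists t; eauto using if_gen_extends.
Qed.

Definition if_gen_correct V W L0 U G L1 : Prop :=
  forall v, ~ In c (targets G) -> (forall t, In t (targets G) -> v t = false) ->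
  scoped L0 V -> scoped L0 W ->
  replace_fv (env_of L1 (fold_right exec_gate v G)) U =
  replace_fv (env_of L0 v) (if v c then V else W).

Lemma if_gen_correct_var x y wx wy L0 z w :
  L0 x = Some wx -> L0 y = Some wy -> new_wire n C L0 w ->
  if_gen_correct (FVar x) (FVar y) L0 (FVar z)
    [Gate w [(true, c); (true, wx)]; Gate w [(false, c); (true, wy)]] (upd L0 z w).
Proof.
  intros Hx Hy (_ & _ & Hnw) v Hc Hv _ _.
  assert (Hvw : v w = false) by (apply Hv; simpl; auto).
  assert (Hcw : c <> w) by (intros ->; apply Hc; simpl; auto).
  assert (Hxw : wx <> w) by (intros ->; exact (Hnw x Hx)).
  unfold env_of; simpl; rewrite upd_eq; simpl.
  rewrite Nat.eqb_refl, !(proj2 (Nat.eqb_neq _ _) Hcw), (proj2 (Nat.eqb_neq _ _) Hxw), Hvw.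
  destruct (v c); simpl; rewrite ?Hx, ?Hy; simpl; destruct (v wx), (v wy); reflexivity.
Qed.

Lemma if_gen_correct_seq V1 W1 L0 U1 G1 L1 V2 W2 U2 G2 L2 :
  if_gen n C c V1 W1 L0 U1 G1 L1 -> if_gen n C c V2 W2 L1 U2 G2 L2 ->
  if_gen_correct V1 W1 L0 U1 G1 L1 -> if_gen_correct V2 W2 L1 U2 G2 L2 ->
  forall v, ~ In c (targets (G1 ++ G2)) ->
  (forall t, In t (targets (G1 ++ G2)) -> v t = false) ->
  scoped L0 V1 -> scoped L0 W1 -> scoped L0 V2 -> scoped L0 W2 ->
  replace_fv (env_of L2 (fold_right exec_gate v (G1 ++ G2))) U1 =
    replace_fv (env_of L0 v) (if v c then V1 else W1) /\
  replace_fv (env_of L2 (fold_right exec_gate v (G1 ++ G2))) U2 =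
    replace_fv (env_of L0 v) (if v c then V2 else W2).
Proof.
  intros H1 H2 IH1 IH2 v Hc Hv SV1 SW1 SV2 SW2.
  rewrite targets_app, in_app_iff in Hc; setoid_rewrite targets_app in Hv.
  setoid_rewrite in_app_iff in Hv.
  rewrite fold_right_app; set (v2 := fold_right exec_gate v G2).
  assert (Hdisj : forall t, In t (targets G1) -> ~ In t (targets G2)).
  { intros t T1 T2; destruct (if_gen_targets _ _ _ _ _ _ H1 t T1) as [_ [x Hx]].
    destruct (if_gen_targets _ _ _ _ _ _ H2 t T2) as [(_ & _ & Hn) _]; exact (Hn x Hx). }
  assert (Hv2 : forall x w, L0 x = Some w -> v2 w = v w).
  { intros x w Hx; apply fold_exec_other; intro T2.
    destruct (if_gen_targets _ _ _ _ _ _ H2 w T2) as [(_ & _ & Hn) _].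
    exact (Hn x (if_gen_extends _ _ _ _ _ _ H1 _ _ Hx)). }
  assert (Hc2 : v2 c = v c) by (apply fold_exec_other; tauto).
  split.
  - transitivity (replace_fv (env_of L1 (fold_right exec_gate v2 G1)) U1).
    { apply rfv_ext; intros x Hx; destruct (if_gen_outputs _ _ _ _ _ _ H1 x Hx) as (t & Ht & _).
      exact (env_of_agree _ _ _ _ _ _ Ht (if_gen_extends _ _ _ _ _ _ H2 _ _ Ht) eq_refl). }
    rewrite IH1, Hc2; auto.
    + apply rfv_frame; [apply scoped_if; auto|]. intros x w Hx; split; eauto.
    + intros t Ht; unfold v2; rewrite fold_exec_other by (apply Hdisj; auto); auto.
  - transitivity (replace_fv (env_of L2 v2) U2).
    { apply rfv_ext; intros x Hx; destruct (if_gen_outputs _ _ _ _ _ _ H2 x Hx) as (t & Ht & T2).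
      apply (env_of_agree _ _ _ _ _ _ Ht Ht), fold_exec_other; intro T1; exact (Hdisj t T1 T2). }
    pose proof (if_gen_extends _ _ _ _ _ _ H1) as Hext.
    unfold v2; rewrite IH2; eauto using scoped_extend.
    apply rfv_frame; [apply scoped_if; auto|]. intros x w Hx; split; auto.
Qed.

Lemma if_gen_sound V W L0 U G L1 :
  if_gen n C c V W L0 U G L1 -> if_gen_correct V W L0 U G L1.
Proof.
  induction 1 as [| V1 V2 W1 W2 L0 U1 G1 L1 U2 G2 L2 H1 IH1 H2 IH2
                 | L0 | V1 V2 W1 W2 L0 U1 G1 L1 U2 G2 L2 H1 IH1 H2 IH2].
  - now apply if_gen_correct_var.
  - intros v Hc Hv SV SW; apply scoped_pair in SV as [], SW as []; simpl.
    destruct (if_gen_correct_seq _ _ _ _ _ _ _ _ _ _ _ H1 H2 IH1 IH2 v) as [-> ->]; auto.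
    destruct (v c); reflexivity.
  - intros v _ _ _ _; destruct (v c); reflexivity.
  - intros v Hc Hv SV SW; apply scoped_pair in SV as [], SW as []; simpl.
    destruct (if_gen_correct_seq _ _ _ _ _ _ _ _ _ _ _ H1 H2 IH1 IH2 v) as [-> ->]; auto.
    destruct (v c); reflexivity.
Qed.

End IfGen.

Lemma run_tt_gate n C L u w : new_wire n C L w -> run n (Gate w [] :: C) u w = true.
Proof. intros Hw; rewrite run_cons, exec_gate_target, (run_new_wire _ _ _ _ _ Hw); reflexivity. Qed.

Lemma run_not_gate n C L u w wp : new_wire n C L w ->
  run n (Gate w [(false, wp)] :: C) u w = negb (run n C u wp).
Proof.
  intros Hw; rewrite run_cons, exec_gate_target, (run_new_wire _ _ _ _ _ Hw); simpl.
  destruct (run n C u wp); reflexivity.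
Qed.

Lemma run_and_gate n C L u w wp wq : new_wire n C L w ->
  run n (Gate w [(true, wp); (true, wq)] :: C) u w = run n C u wp && run n C u wq.
Proof.
  intros Hw; rewrite run_cons, exec_gate_target, (run_new_wire _ _ _ _ _ Hw); simpl.
  destruct (run n C u wp), (run n C u wq); reflexivity.
Qed.

Lemma run_xor_gates n C L u w wp wq : new_wire n C L w -> wp <> w ->
  run n (Gate w [(true, wp)] :: Gate w [(true, wq)] :: C) u w =
  xorb (run n C u wp) (run n C u wq).
Proof.
  intros Hw Hp; rewrite !run_cons, !exec_gate_target; simpl.
  rewrite (proj2 (Nat.eqb_neq _ _) Hp), (run_new_wire _ _ _ _ _ Hw).
  destruct (run n C u wp), (run n C u wq); reflexivity.
Qed.

Lemma readback_upd_var n C L u z w :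
  readback n C (upd L z w) (FVar z) u = of_bool (run n C u w).
Proof. unfold readback, upd; simpl; rewrite Nat.eqb_refl; reflexivity. Qed.

Lemma am_head_local n k R C L R' C' L' u : am_head n k R C L R' C' L' -> scoped L R ->
  (k = KConst /\ readback n C L R u = readback n C' L' R' u)
  \/ head_red (readback n C L R u) (readback n C' L' R' u) \/ R' = Err.
Proof.
  destruct 1 as [R R' C L Hpure | C L z w _ Hw | C L z w _ Hw
                | C L p wp z w Hp _ Hw | C L p q wp wq z w Hp Hq _ Hw
                | C L p q wp wq z w Hp Hq _ Hw | C L p wp V W U G L'' Hp _ _ _ Hig | ];
    intros HR; try rewrite readback_upd_var.
  - right; left; apply H_pure, pure_red_rfv, Hpure.
  - left; rewrite (run_new_wire _ _ _ _ _ Hw); auto.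
  - left; rewrite (run_tt_gate _ _ _ _ _ Hw); auto.
  - right; left; rewrite (run_not_gate _ _ _ _ _ _ Hw).
    unfold readback; simpl; rewrite Hp; apply H_not.
  - right; left; rewrite (run_and_gate _ _ _ _ _ _ _ Hw).
    unfold readback; simpl; rewrite Hp, Hq; apply H_and.
  - right; left; rewrite (run_xor_gates _ _ _ _ _ _ _ Hw)
      by (intros ->; destruct Hw as (_ & _ & Hnw); exact (Hnw p Hp)).
    unfold readback; simpl; rewrite Hp, Hq; apply H_xor.
  - right; left.
    assert (Hnew : forall t, In t (targets G) -> new_wire n C L t)
      by (intros t Ht; exact (proj1 (if_gen_targets _ _ _ _ _ _ _ _ _ Hig t Ht))).
    assert (HV : scoped L V /\ scoped L W)
      by (split; intros x Hx; apply HR; simpl; rewrite !in_app_iff; auto).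
    rewrite (readback_env n (G ++ C)), run_app, (if_gen_sound _ _ _ _ _ _ _ _ _ Hig); try tauto.
    + unfold readback; simpl; rewrite Hp; simpl.
      destruct (run n C u wp); [apply H_if_tt | apply H_if_ff].
    + intros Ht; destruct (Hnew _ Ht) as (_ & _ & Hn); exact (Hn p Hp).
    + intros t Ht; exact (run_new_wire _ _ _ _ _ (Hnew t Ht)).
  - right; right; reflexivity.
Qed.

Lemma am_head_frame n k R C L R' C' L' u : am_head n k R C L R' C' L' ->
  forall x w, L x = Some w -> L' x = Some w /\ run n C' u w = run n C u w.
Proof.
  destruct 1 as [| C L z w Hz Hw | C L z w Hz Hw | C L p wp z w _ Hz Hw
                | C L p q wp wq z w _ _ Hz Hw | C L p q wp wq z w _ _ Hz Hw
                | C L p wp V W U G L'' _ _ _ _ Hig | ];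
    intros x w0 Hx; try (split; [exact Hx | reflexivity]).
  1-5: destruct (upd_fresh _ _ _ _ _ _ _ Hz Hw Hx) as [Hupd Hne];
       split; [exact Hupd | rewrite ?run_cons, ?exec_gate_other by exact Hne; reflexivity].
  split; [exact (if_gen_extends _ _ _ _ _ _ _ _ _ Hig _ _ Hx)|].
  rewrite run_app; apply fold_exec_other; intros Ht.
  destruct (if_gen_targets _ _ _ _ _ _ _ _ _ Hig _ Ht) as [(_ & _ & Hn) _]; exact (Hn x Hx).
Qed.

Theorem lemma1 (n m : nat) (M N : tm) (C C' : list gate) (L L' : lmap)
  (k : step_kind) (u : nat -> bool) :
  cgam n M C L m ->
  am_step n k M C L N C' L' ->
  (k = KConst /\ readback n C L M u = readback n C' L' N u)
  \/ step (readback n C L M u) (readback n C' L' N u)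
  \/ contains_err N.
Proof.
  intros [Hty _] (E & R & R' & -> & -> & Hhead).
  pose proof (typed_scoped _ _ _ _ Hty) as Hscoped.
  assert (HE : scoped L (fill E Skip))
    by (intros x Hx; apply Hscoped, in_fvs_fill; auto).
  assert (HR : scoped L R) by (intros x Hx; apply Hscoped, in_fvs_fill; auto).
  rewrite !readback_env, !rfv_fill, <- !readback_env.
  rewrite (ctx_rfv_frame _ _ _ _ _ HE (am_head_frame _ _ _ _ _ _ _ _ u Hhead)).
  destruct (am_head_local _ _ _ _ _ _ _ _ u Hhead HR) as [[-> Heq] | [Hred | ->]].
  - left; split; [reflexivity | congruence].
  - right; left; exists (ctx_rfv (env_of L (run n C u)) E); eauto.
  - right; right; exists E; reflexivity.
Qed.
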